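(* Let $X$ be a complex Banach space and let $(Q,V)$ be a bounded symmetric pair of $X$. Let $V_0\subset V^Q$ be a closed linear subspace. Let $h\in\{1,-1\}$ and $c\ge0$. Let $\alpha$ be a closed linear subspace of $V$ that is positive semi-definite with respect to $hQ$, and let $\beta$ be a closed linear subspace of $V$ that is negative definite with respect to $hQ$, with $V_0=\beta^{Q|_\beta}$ and $\gamma(Q|_\beta)>0$. Assume that $V=\alpha\oplus\beta$ is a $Q$-orthogonal direct sum decomposition. Then there is $\varepsilon>0$ such that for every bounded symmetric pair $(R,W)$ of $X$ and every closed linear subspace $W_0\subset W^R$ with $\hat\delta(V,W)<\varepsilon$, $\delta(V_0,W_0)<\varepsilon$ and $\delta_c(Q,R)<\varepsilon$, we have $$m^+(hR)+\dim W^R/W_0\le \dim\alpha.$$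
   Context: A bounded symmetric pair $(Q,V)$ consists of a closed subspace $V\subset X$ and a Hermitian sesquilinear form $Q\colon V\times V\to\mathbb{C}$ with $\sup_{x,y\in V\setminus\{0\}}|Q(x,y)|/(\|x\|\|y\|)<\infty$. For a subset $\lambda\subset V$, $\lambda^Q:=\{u\in V: Q(u,v)=0\ \forall v\in\lambda\}$; in particular $V^Q$ is the radical of $Q$, and for a subspace $\beta\subset V$, $\beta^{Q|_\beta}:=\{u\in\beta: Q(u,v)=0\ \forall v\in\beta\}$. For a bounded semi-definite form $Q$ on $V$, $\gamma(Q):=\inf_{x\in V\setminus V^Q}|Q(x,x)|/\operatorname{dist}(x,V^Q)^2$ (and $0$ if $V=\{0\}$). $m^+(hR)$ is the supremum of the dimensions of subspaces of $W$ on which $hR$ is positive definite. $Q$-orthogonal means $Q(a,b)=0$ for $a\in\alpha$, $b\in\beta$. For linear subspaces $A,B$: $\delta(A,B):=\sup_{u\in A,\|u\|=1}\operatorname{dist}(u,B)$ ($0$ if $A=\{0\}$), $\hat\delta(A,B):=\max\{\delta(A,B),\delta(B,A)\}$. For bounded symmetric pairs $(Q,V)$, $(R,W)$ and $c\ge0$, $\delta_c(Q,R)$ is the infimum of $\delta\ge0$ such that $|Q(x,y)-R(u,v)|\le\delta(\|u\|+\|x\|)(\|v\|+\|y\|)+c\big((\|u\|+\|x\|)\|v-y\|+\|u-x\|(\|v\|+\|y\|)\big)$ for all $x,y\in V$, $u,v\in W$. *)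

From HB Require Import structures.
From mathcomp Require Import all_boot all_order all_algebra.
From mathcomp Require Import complex.
From mathcomp Require Import all_classical all_reals all_analysis.
Import Order.TTheory GRing.Theory Num.Theory.
Import numFieldNormedType.Exports.

Set Implicit Arguments.
Unset Strict Implicit.
Unset Printing Implicit Defensive.

Local Open Scope classical_set_scope.
Local Open Scope ring_scope.
Local Open Scope complex_scope.

Section Defs.
Context {R : realType} {X : normedModType R[i]}.

Definition cabs (z : R[i]) : R := complex.Re `|z|.
Definition nrm (x : X) : R := complex.Re `|x|.

Definition is_subspace (V : set X) : Prop :=
  V 0 /\ forall (a : R[i]) x y, V x -> V y -> V (a *: x + y).
Definition closed_subspace (V : set X) : Prop := is_subspace V /\ closed V.

Definition bounded_symmetric_pair (Q : X -> X -> R[i]) (V : set X) : Prop :=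
  [/\ closed_subspace V,
      (forall (a : R[i]) x y z, V x -> V y -> V z ->
          Q (a *: x + y) z = a * Q x z + Q y z),
      (forall (a : R[i]) x y z, V x -> V y -> V z ->
          Q z (a *: x + y) = a^* * Q z x + Q z y),
      (forall x y, V x -> V y -> Q y x = (Q x y)^*) &
      (exists M : R, forall x y, V x -> V y ->
          cabs (Q x y) <= M * nrm x * nrm y)].

Definition Qorth (Q : X -> X -> R[i]) (V lambda : set X) : set X :=
  [set u | V u /\ forall v, lambda v -> Q u v = 0].
(* radical V^Q ; for a subspace beta, beta^{Q|beta} = Qorth Q beta beta *)
Definition radical (Q : X -> X -> R[i]) (V : set X) : set X := Qorth Q V V.

Definition pos_semidef (h : R[i]) (Q : X -> X -> R[i]) (S : set X) : Prop :=
  forall x, S x -> 0 <= h * Q x x.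
Definition pos_def (h : R[i]) (Q : X -> X -> R[i]) (S : set X) : Prop :=
  forall x, S x -> x != 0 -> 0 < h * Q x x.
Definition neg_def (h : R[i]) (Q : X -> X -> R[i]) (S : set X) : Prop :=
  forall x, S x -> x != 0 -> h * Q x x < 0.

Definition Qorth_direct_sum (Q : X -> X -> R[i]) (V alpha beta : set X) : Prop :=
  [/\ (forall v, V v <-> exists a b, [/\ alpha a, beta b & v = a + b]),
      (forall x, alpha x -> beta x -> x = 0) &
      (forall a b, alpha a -> beta b -> Q a b = 0)].

Definition dist (u : X) (B : set X) : \bar R :=
  ereal_inf [set (nrm (u - b))%:E | b in B].

Definition gamma (Q : X -> X -> R[i]) (V : set X) : \bar R :=
  if `[< V = [set 0] >] then 0%E
  else ereal_inf [set ((cabs (Q x x)) / (fine (dist x (radical Q V))) ^+ 2)%:E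
                 | x in [set x | V x /\ ~ radical Q V x]].

Definition gap (A B : set X) : \bar R :=
  ereal_sup ([set 0%E] `|` [set dist u B | u in [set u | A u /\ nrm u = 1]]).
Definition gap_hat (A B : set X) : \bar R := maxe (gap A B) (gap B A).

Definition delta_c (c : R) (Q : X -> X -> R[i]) (V : set X)
    (S : X -> X -> R[i]) (W : set X) : \bar R :=
  ereal_inf [set d%:E | d in [set d : R | 0 <= d /\
     forall x y u v, V x -> V y -> W u -> W v ->
       cabs (Q x y - S u v) <=
         d * (nrm u + nrm x) * (nrm v + nrm y)
         + c * ((nrm u + nrm x) * nrm (v - y) + nrm (u - x) * (nrm v + nrm y))]].

Definition lin_indep_mod (S0 : set X) (n : nat) (v : 'I_n -> X) : Prop :=
  forall a : 'I_n -> R[i], S0 (\sum_(i < n) a i *: v i) -> forall i, a i = 0.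

Definition dim_quot (S S0 : set X) : \bar R :=
  ereal_sup [set (n%:R)%:E | n in
    [set n : nat | exists v : 'I_n -> X, (forall i, S (v i)) /\ lin_indep_mod S0 v]].

Definition dimension (S : set X) : \bar R := dim_quot S [set 0].

Definition m_plus (h : R[i]) (S : X -> X -> R[i]) (W : set X) : \bar R :=
  ereal_sup [set dimension U | U in
    [set U | [/\ is_subspace U, U `<=` W & pos_def h S U]]].

End Defs.

(* Suppose m^+(hR) + dim W^R/W_0 > N := dim alpha.  A subspace of W on which
   hR is positive definite, together with vectors of the radical W^R that are
   independent modulo W_0, spans a subspace Z of W of dimension > N on which
   hR is positive semi-definite.  By Riesz's lemma Z contains unit vectors
   z_0, ..., z_N, each at distance >= 1/2 from the span of its predecessors,
   so the coefficients of a combination of the z_i are bounded by 3^(N+1)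
   times its norm.  Each z_i is eps-close to some a_i + b_i with a_i in alpha
   and b_i in beta; the a_i are dependent, so some nontrivial combination
   z = sum t_i z_i is within eps 3^(N+1) |z| of v = sum t_i b_i in beta.
   Then hR(z,z) >= 0 while hQ(v,v) <= -gamma(Q|beta) |v|^2, which contradicts
   delta_c(Q,R) < eps once eps is small. *)

From HB Require Import structures.
From mathcomp Require Import all_boot all_order all_algebra.
From mathcomp Require Import complex.
From mathcomp Require Import all_classical all_reals all_analysis.
From mathcomp Require Import ring lra.
Import Order.TTheory GRing.Theory Num.Theory.
Import numFieldNormedType.Exports.

Set Implicit Arguments.
Unset Strict Implicit.
Unset Printing Implicit Defensive.

Local Open Scope classical_set_scope.
Local Open Scope ring_scope.
Local Open Scope complex_scope.

Section NormFacts.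
Context {R : realType} {X : normedModType R[i]}.
Implicit Types (x y : X) (a b : R[i]).

Lemma ge0_complexE (p : R[i]) : 0 <= p -> p = (complex.Re p)%:C.
Proof. by move=> hp; rewrite {1}[p]complexE (ger0_Im hp) mulr0 addr0. Qed.

Lemma Re_ge0 (p : R[i]) : 0 <= p -> 0 <= complex.Re p.
Proof. by rewrite lecE => /andP[]. Qed.

Lemma Re_le (p q : R[i]) : p <= q -> complex.Re p <= complex.Re q.
Proof. by rewrite lecE => /andP[]. Qed.

Lemma ReD (p q : R[i]) : complex.Re (p + q) = complex.Re p + complex.Re q.
Proof. by case: p; case: q. Qed.

Lemma ReB (p q : R[i]) : complex.Re (p - q) = complex.Re p - complex.Re q.
Proof. by case: p; case: q. Qed.

Lemma ImB (p q : R[i]) : complex.Im (p - q) = complex.Im p - complex.Im q.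
Proof. by case: p; case: q. Qed.

Lemma ReRM (r : R) (p : R[i]) : complex.Re (r%:C * p) = r * complex.Re p.
Proof. by case: p => a b /=; rewrite mul0r subr0. Qed.

Lemma nrmE x : `|x| = (nrm x)%:C.
Proof. exact: ge0_complexE. Qed.

Lemma cabsE a : `|a| = (cabs a)%:C.
Proof. exact: ge0_complexE. Qed.

Lemma nrm_ge0 x : 0 <= nrm x.
Proof. exact: Re_ge0. Qed.

Lemma cabs_ge0 a : 0 <= cabs a.
Proof. exact: Re_ge0. Qed.

Lemma nrmD x y : nrm (x + y) <= nrm x + nrm y.
Proof. by rewrite /nrm -ReD; apply/Re_le/ler_normD. Qed.

Lemma cabsD a b : cabs (a + b) <= cabs a + cabs b.
Proof. by rewrite /cabs -ReD; apply/Re_le/ler_normD. Qed.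

Lemma nrmZ a x : nrm (a *: x) = cabs a * nrm x.
Proof. by rewrite /nrm normrZ cabsE ReRM. Qed.

Lemma cabsM a b : cabs (a * b) = cabs a * cabs b.
Proof. by rewrite /cabs normrM cabsE ReRM. Qed.

Lemma nrmN x : nrm (- x) = nrm x.
Proof. by rewrite /nrm normrN. Qed.

Lemma cabsN a : cabs (- a) = cabs a.
Proof. by rewrite /cabs normrN. Qed.

Lemma nrmB x y : nrm (x - y) = nrm (y - x).
Proof. by rewrite -nrmN opprB. Qed.

Lemma cabsB a b : cabs (a - b) = cabs (b - a).
Proof. by rewrite -cabsN opprB. Qed.

Lemma nrm0 : nrm (0 : X) = 0.
Proof. by rewrite /nrm normr0. Qed.

Lemma cabs0 : cabs (0 : R[i]) = 0.
Proof. by rewrite /cabs normr0. Qed.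

Lemma cabs1 : cabs (1 : R[i]) = 1.
Proof. by rewrite /cabs normr1. Qed.

Lemma cabsi : cabs ('i : R[i]) = 1.
Proof. by rewrite /cabs complexiE normCi. Qed.

Lemma nrm_eq0 x : (nrm x == 0) = (x == 0).
Proof. by rewrite -[x == 0]normr_eq0 nrmE eq_complex /= eqxx andbT. Qed.

Lemma cabs_eq0 a : (cabs a == 0) = (a == 0).
Proof. by rewrite -[a == 0]normr_eq0 cabsE eq_complex /= eqxx andbT. Qed.

Lemma nrm_gt0 x : x != 0 -> 0 < nrm x.
Proof. by move=> x0; rewrite lt_def nrm_ge0 nrm_eq0 x0. Qed.

Lemma cabs_gt0 a : a != 0 -> 0 < cabs a.
Proof. by move=> a0; rewrite lt_def cabs_ge0 cabs_eq0 a0. Qed.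

Lemma cabsR (r : R) : 0 <= r -> cabs r%:C = r.
Proof. by move=> r0; rewrite /cabs ger0_norm ?lecR. Qed.

Lemma cabs_real (r : R) : cabs r%:C = `|r|.
Proof.
have [r0|r0] := lerP 0 r; first by rewrite cabsR // ger0_norm.
rewrite -[r]opprK rmorphN cabsN normrN cabsR ?oppr_ge0 ?ltW //.
by rewrite gtr0_norm ?oppr_gt0.
Qed.

Lemma Re_le_cabs a : complex.Re a <= cabs a.
Proof. by apply: le_trans (Re_le (normc_ge_Re a)); apply: ler_norm. Qed.

Lemma normRe_le_cabs a : `|complex.Re a| <= cabs a.
Proof. exact: (Re_le (normc_ge_Re a)). Qed.

Lemma normIm_le_cabs a : `|complex.Im a| <= cabs a.
Proof.
by have := normRe_le_cabs (a * 'i); rewrite ReiNIm normrN cabsM cabsi mulr1.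
Qed.

Lemma cabs_le_ReIm a : cabs a <= `|complex.Re a| + `|complex.Im a|.
Proof.
rewrite {1}[a]complexE; apply: le_trans (cabsD _ _) _.
by rewrite cabsM cabsi mul1r !cabs_real.
Qed.

Lemma nrm_sum (I : Type) (r : seq I) (P : pred I) (F : I -> X) :
  nrm (\sum_(i <- r | P i) F i) <= \sum_(i <- r | P i) nrm (F i).
Proof.
elim/big_rec2: _; first by rewrite nrm0.
by move=> i y1 y2 _ hy; apply: le_trans (nrmD _ _) _; apply: lerD.
Qed.

Lemma nrm_subl x y : nrm y <= nrm x + nrm (x - y).
Proof.
by rewrite -{1}(subKr x y); apply: le_trans (nrmD _ _) _; rewrite nrmN.
Qed.

End NormFacts.

Section Subspaces.
Context {R : realType} {X : normedModType R[i]}.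
Implicit Types (Z : set X).

Lemma subsp0 Z : is_subspace Z -> Z 0.
Proof. by case. Qed.

Lemma subspD Z x y : is_subspace Z -> Z x -> Z y -> Z (x + y).
Proof. by case=> _ h hx hy; have := h 1 _ _ hx hy; rewrite scale1r. Qed.

Lemma subspZ Z a x : is_subspace Z -> Z x -> Z (a *: x).
Proof. by case=> h0 h hx; have := h a _ _ hx h0; rewrite addr0. Qed.

Lemma subspN Z x : is_subspace Z -> Z x -> Z (- x).
Proof. by move=> hZ hx; rewrite -scaleN1r; apply: subspZ. Qed.

Lemma subspB Z x y : is_subspace Z -> Z x -> Z y -> Z (x - y).
Proof. by move=> hZ hx hy; apply: subspD => //; apply: subspN. Qed.

Lemma subsp_sum Z (I : Type) (r : seq I) (P : pred I) (F : I -> X) :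
  is_subspace Z -> (forall i, P i -> Z (F i)) -> Z (\sum_(i <- r | P i) F i).
Proof.
move=> hZ hF; elim/big_rec: _; first exact: subsp0.
by move=> i x Pi hx; apply: subspD => //; apply: hF.
Qed.

Lemma lin_indep_mod0 (S0 : set X) n (v : 'I_n -> X) :
  S0 0 -> lin_indep_mod S0 v -> lin_indep_mod [set 0] v.
Proof. by move=> S00 hv a /= ha; apply: hv; rewrite ha. Qed.

Lemma lin_dep_relation n (v : 'I_n -> X) :
  ~ lin_indep_mod [set 0] v ->
  exists t : 'I_n -> R[i], \sum_(i < n) t i *: v i = 0 /\ exists i, t i != 0.
Proof.
move=> hv; apply: contrapT => hn; apply: hv => t ht i.
by apply: contrapT => /eqP ti; apply: hn; exists t; split => //; exists i.
Qed.

(* A nonzero row of the kernel of the coefficient matrix gives the relation. *)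
Lemma span_lin_dep (p j : nat) (x : 'I_p -> X) (z : nat -> X) : (j < p)%N ->
  (forall i, exists c : nat -> R[i], x i = \sum_(l < j) c l *: z l) ->
  ~ lin_indep_mod [set 0] x.
Proof.
move=> hjp hx hind.
have [cF hcF] := choice hx.
pose M : 'M[R[i]]_(p, j) := \matrix_(i < p, l < j) cF i l.
have : kermx M != 0.
  rewrite kermx_eq0; apply/negP => /eqP hr.
  by have := rank_leq_col M; rewrite hr leqNgt hjp.
apply/negP; rewrite negbK; apply/eqP/matrixP => k l; rewrite [RHS]mxE.
apply: (hind (fun i => kermx M k i) _ l) => /=.
have e l0 : \sum_(i < p) kermx M k i * M i l0 = 0.
  by move: (mulmx_ker M) => /matrixP /(_ k l0); rewrite !mxE.
rewrite (eq_bigr (fun i => \sum_(l0 < j) (kermx M k i * M i l0) *: z l0)).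
  by rewrite exchange_big /= big1 // => l0 _; rewrite -scaler_suml e scale0r.
move=> i _; rewrite hcF scaler_sumr; apply: eq_bigr => l0 _.
by rewrite scalerA [M _ _]mxE.
Qed.

End Subspaces.

Section CauchyLimits.
Context {R : realType}.

Lemma eq0_le_div_succ (a B : R) :
  0 <= a -> (forall m : nat, a <= B / m.+1%:R) -> a = 0.
Proof.
move=> a0 hm; apply/eqP; rewrite eq_le a0 andbT leNgt; apply/negP => apos.
have B0 : 0 <= B by apply: le_trans a0 _; have := hm 0%N; rewrite divr1.
set m := Num.Def.archi_bound (B / a).
have := archi_boundP (divr_ge0 B0 (ltW apos)).
rewrite -/m ltr_pdivrMr // => hBm.
have := hm m; rewrite ler_pdivlMr ?ltr0Sn // -natr1; nra.
Qed.

(* The limit is the supremum of the lower bounds [r m - C / m.+1]. *)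
Lemma cauchy_limit (r : nat -> R) (C : R) :
  (forall m l, `|r m - r l| <= C / m.+1%:R + C / l.+1%:R) ->
  exists L, forall m, `|r m - L| <= C / m.+1%:R.
Proof.
move=> hc; pose E := [set r m - C / m.+1%:R | m in [set: nat]].
have ubE l : ubound E (r l + C / l.+1%:R).
  move=> _ [m _ <-]; have := hc m l; rewrite ler_norml => /andP[_].
  set a := C / _; set b := C / _; lra.
have nE : E !=set0 by exists (r 0%N - C / 1%:R), 0%N.
have hE : has_ubound E by exists (r 0%N + C / 1%:R); apply: ubE.
exists (sup E) => m; rewrite ler_norml; apply/andP; split.
- by have := ge_sup nE (ubE m); set a := C / _; lra.
- have : r m - C / m.+1%:R <= sup E by apply: ub_le_sup => //; exists m.
  by set a := C / _; lra.
Qed.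

Lemma cauchy_limitC (c : nat -> R[i]) (C : R) :
  (forall m l, cabs (c m - c l) <= C / m.+1%:R + C / l.+1%:R) ->
  exists L, forall m, cabs (c m - L) <= (C + C) / m.+1%:R.
Proof.
move=> hc.
have [Lr hLr] : exists L, forall m, `|complex.Re (c m) - L| <= C / m.+1%:R.
  apply: cauchy_limit => m l.
  by rewrite -ReB; apply: le_trans (normRe_le_cabs _) (hc m l).
have [Li hLi] : exists L, forall m, `|complex.Im (c m) - L| <= C / m.+1%:R.
  apply: cauchy_limit => m l.
  by rewrite -ImB; apply: le_trans (normIm_le_cabs _) (hc m l).
exists (Lr +i* Li) => m; apply: le_trans (cabs_le_ReIm _) _.
by rewrite ReB ImB mulrDl; apply: lerD.
Qed.

End CauchyLimits.

Section RieszFamily.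
Context {R : realType} {X : normedModType R[i]}.
Implicit Types (t : nat -> R[i]) (z : nat -> X).

Definition lincomb (j : nat) t z : X := \sum_(i < j) t i *: z i.

Lemma lincombB j t1 t2 z :
  lincomb j (fun i => t1 i - t2 i) z = lincomb j t1 z - lincomb j t2 z.
Proof. by rewrite /lincomb -sumrB; apply: eq_bigr => i _; rewrite scalerBl. Qed.

Lemma lincombD j t1 t2 z :
  lincomb j (fun i => t1 i + t2 i) z = lincomb j t1 z + lincomb j t2 z.
Proof.
by rewrite /lincomb -big_split; apply: eq_bigr => i _; rewrite scalerDl.
Qed.

Lemma lincombZ j k t z : lincomb j (fun i => k * t i) z = k *: lincomb j t z.
Proof.
by rewrite /lincomb scaler_sumr; apply: eq_bigr => i _; rewrite scalerA.
Qed.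

Lemma nrm_lincomb j t z :
  nrm (lincomb j t z) <= \sum_(i < j) cabs (t i) * nrm (z i).
Proof.
by apply: le_trans (nrm_sum _ _ _) _; apply: ler_sum => i _; rewrite nrmZ.
Qed.

Lemma cabs_le_sum j t (i : nat) :
  (i < j)%N -> cabs (t i) <= \sum_(k < j) cabs (t k).
Proof.
move=> hi; rewrite (bigD1 (Ordinal hi)) //= lerDl.
by apply: sumr_ge0 => k _; apply: cabs_ge0.
Qed.

Section BoundedCoefficients.
Variables (j : nat) (z : nat -> X) (K : R).
Hypothesis K_ge0 : 0 <= K.
Hypothesis coef_bound :
  forall t, \sum_(i < j) cabs (t i) <= K * nrm (lincomb j t z).

(* The coefficient bound makes approximating coefficients Cauchy. *)
Lemma lincomb_closed x :
  (forall m : nat, exists t, nrm (x - lincomb j t z) <= m.+1%:R^-1) ->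
  exists t, x = lincomb j t z.
Proof.
move=> /choice[T hT].
have hc i : (i < j)%N ->
    forall m l, cabs (T m i - T l i) <= K / m.+1%:R + K / l.+1%:R.
  move=> hi m l; apply: le_trans (cabs_le_sum (fun k => T m k - T l k) hi) _.
  apply: le_trans (coef_bound (fun k => T m k - T l k)) _.
  rewrite lincombB -mulrDr ler_wpM2l //.
  have -> : lincomb j (T m) z - lincomb j (T l) z =
      (x - lincomb j (T l) z) - (x - lincomb j (T m) z).
    by rewrite [RHS]addrC opprB addrA subrK.
  by apply: le_trans (nrmD _ _) _; rewrite nrmN addrC; apply: lerD.
have hL i : exists L, (i < j)%N ->
    forall m, cabs (T m i - L) <= (K + K) / m.+1%:R.
  have [hi|_] := ltnP i j; last by exists 0.
  by have [L hL] := cauchy_limitC (hc i hi); exists L.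
have [L hLi] := choice hL.
exists L; apply/eqP; rewrite -subr_eq0 -nrm_eq0; apply/eqP.
apply: (@eq0_le_div_succ _ _ (1 + (K + K) * \sum_(i < j) nrm (z i)));
  first exact: nrm_ge0.
move=> m; have -> : x - lincomb j L z =
    (x - lincomb j (T m) z) + lincomb j (fun i => T m i - L i) z.
  by rewrite lincombB addrA subrK.
apply: le_trans (nrmD _ _) _; rewrite mulrDl mul1r; apply: lerD => //.
apply: le_trans (nrm_lincomb _ _ _) _; rewrite mulrAC mulr_sumr.
by apply: ler_sum => i _; rewrite ler_wpM2r ?nrm_ge0 //; apply: hLi.
Qed.

Lemma dist_span_gt0 x : (forall t, x <> lincomb j t z) ->
  exists2 d, 0 < d & forall t, d <= nrm (x - lincomb j t z).
Proof.
move=> hx; apply: contrapT => hn.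
have [t] : exists t, x = lincomb j t z; last exact: hx.
apply: lincomb_closed => m; apply: contrapT => hm; apply: hn.
exists m.+1%:R^-1 => [|t]; first by rewrite invr_gt0 ltr0Sn.
by rewrite leNgt; apply/negP => /ltW ht; apply: hm; exists t.
Qed.

End BoundedCoefficients.

Definition riesz_family (j : nat) z := forall i, (i < j)%N ->
  nrm (z i) = 1 /\ forall t, 1 / 2 <= nrm (z i - lincomb i t z).

(* The last coefficient is at most [2 |s|] and the remaining combination at
   most [3 |s|]; [K j = 3^j - 1] solves [K (j + 1) = 3 K j + 2]. *)
Lemma riesz_family_coef_bound j z : riesz_family j z ->
  forall t, \sum_(i < j) cabs (t i) <= (3 ^+ j - 1) * nrm (lincomb j t z).
Proof.
elim: j => [|j IH] hr t; first by rewrite big_ord0 expr0 subrr mul0r.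
have [zj1 hzj] := hr j (ltnSn j).
set s := lincomb j.+1 t z.
have es : s = lincomb j t z + t j *: z j by rewrite /s /lincomb big_ord_recr.
have htj : cabs (t j) <= 2 * nrm s.
  have [->|tj0] := eqVneq (t j) 0; first by rewrite cabs0 mulr_ge0 ?nrm_ge0.
  have -> : s = t j *: (z j - lincomb j (fun l => - (t l / t j)) z).
    rewrite es scalerBr addrC; congr (_ + _).
    rewrite /lincomb scaler_sumr -sumrN; apply: eq_bigr => i _.
    by rewrite scalerA mulrN scaleNr opprK mulrCA mulfV // mulr1.
  rewrite nrmZ; have := hzj (fun l => - (t l / t j)); have := cabs_ge0 (t j).
  by set a := cabs _; set b := nrm _; nra.
have hrest : nrm (lincomb j t z) <= 3 * nrm s.
  rewrite -[lincomb j t z](addrK (t j *: z j)) -es.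
  by apply: le_trans (nrmD _ _) _; rewrite nrmN nrmZ zj1 mulr1; lra.
have hr' : riesz_family j z by move=> i hi; apply/hr/ltnW.
have K0 : 0 <= 3 ^+ j - 1 :> R by rewrite subr_ge0 exprn_ege1 // ler1n.
rewrite big_ord_recr /= exprS; have := IH hr' t.
move: htj hrest K0; set K := 3 ^+ j - 1; rewrite -[3 ^+ j](subrK 1) -/K.
by set a := cabs _; set c := nrm (lincomb j t z); nra.
Qed.

(* Riesz's lemma: normalise [x - y] for a [y] in the span that is nearly
   closest to [x]. *)
Lemma riesz_step j z x : riesz_family j z -> (forall t, x <> lincomb j t z) ->
  exists y, [/\ nrm y = 1, forall t, 1 / 2 <= nrm (y - lincomb j t z) &
    exists t0 (k : R[i]), y = k *: (x - lincomb j t0 z)].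
Proof.
move=> hr hx.
have K0 : 0 <= 3 ^+ j - 1 :> R by rewrite subr_ge0 exprn_ege1 // ler1n.
have [d d0 hd] := dist_span_gt0 K0 (riesz_family_coef_bound hr) hx.
pose E := [set nrm (x - lincomb j t z) | t in [set: nat -> R[i]]].
have nE : E !=set0 by exists (nrm (x - lincomb j (fun=> 0) z)), (fun=> 0).
have lbE : lbound E d by move=> _ [t _ <-].
have dE : d <= inf E by apply: lb_le_inf.
have [_ [t0 _ <-] ht0] : exists2 e, E e & e < inf E + inf E.
  by apply: inf_lt => //; lra.
set n0 := nrm _ in ht0.
have n0pos : 0 < n0 by apply: lt_le_trans d0 (hd t0).
exists ((n0^-1)%:C *: (x - lincomb j t0 z)); split.
- by rewrite nrmZ cabsR ?invr_ge0 ?(ltW n0pos) // mulVf ?gt_eqF.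
- move=> t; have c1 : (n0^-1)%:C * n0%:C = 1 :> R[i].
    by rewrite -rmorphM /= mulVf ?gt_eqF.
  have -> : (n0^-1)%:C *: (x - lincomb j t0 z) - lincomb j t z =
      (n0^-1)%:C *: (x - lincomb j (fun i => t0 i + n0%:C * t i) z).
    rewrite lincombD lincombZ !scalerBr scalerDr scalerA c1 scale1r.
    by rewrite opprD addrA.
  rewrite nrmZ cabsR ?invr_ge0 ?(ltW n0pos) // ler_pdivlMl // mulrC.
  have : inf E <= nrm (x - lincomb j (fun i => t0 i + n0%:C * t i) z).
    by apply: ge_inf; [exists d | exists (fun i => t0 i + n0%:C * t i)].
  lra.
- by exists t0, (n0^-1)%:C.
Qed.

Lemma riesz_family_in_subspace (Z : set X) (p : nat) (y : 'I_p -> X) :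
  is_subspace Z -> (forall i, Z (y i)) -> lin_indep_mod [set 0] y ->
  forall j, (j <= p)%N ->
  exists z, riesz_family j z /\ forall i, (i < j)%N -> Z (z i).
Proof.
move=> hZ hy hind; elim=> [|j IH] hj; first by exists (fun=> 0); split => // i.
have [z [hr hzZ]] := IH (ltnW hj).
have [i0 hi0] : exists i, forall t, y i <> lincomb j t z.
  apply: contrapT => hn; apply: (span_lin_dep hj _ hind) => i.
  apply: contrapT => hne; apply: hn; exists i => t ht.
  by apply: hne; exists t; exact: ht.
have [y' [y1 hy' [t0 [k ey']]]] := riesz_step hr hi0.
pose z' n := if n == j then y' else z n.
have z'j : z' j = y' by rewrite /z' eqxx.
have z'E i : (i < j)%N -> z' i = z i by move=> hi; rewrite /z' ltn_eqF.
have lincomb_z' i t : (i <= j)%N -> lincomb i t z' = lincomb i t z.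
  by move=> hi; apply: eq_bigr => l _; rewrite z'E // (leq_trans (ltn_ord l)).
exists z'; split => i; rewrite ltnS leq_eqVlt => /orP[/eqP ->|hi].
- by rewrite z'j; split => // t; rewrite (lincomb_z' j t).
- have [zi1 hzi] := hr i hi.
  by rewrite (z'E i hi); split => // t; rewrite (lincomb_z' i t (ltnW hi)).
- rewrite z'j ey'; apply: subspZ => //; apply: subspB => //.
  by apply: subsp_sum => // l _; apply: subspZ => //; apply: hzZ.
- by rewrite (z'E i hi); apply: hzZ.
Qed.

End RieszFamily.

Section Perturbation.
Context {R : realType}.

(* With [e <= q s] the norm [nv] stays within [s/2 .. 5s/2]; the choice of
   [q] then makes the right-hand side smaller than [g s^2 / 4 <= g nv^2]. *)
Lemma perturbed_square_contra (g c q d s e nv : R) :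
  0 <= c -> 0 <= d -> d < q -> q <= 1 / 2 -> q * (25 + 20 * c) <= g ->
  0 < s -> 0 <= e -> e <= q * s -> s - e <= nv -> nv <= s + e ->
  g * nv ^+ 2 <= d * (s + nv) * (s + nv) + c * ((s + nv) * e + e * (s + nv)) ->
  False.
Proof.
move=> c0 d0 dq q2 hq s0 e0 es hnvl hnvu hb.
have hnv : s / 2 <= nv by nra.
have hsnv : s + nv <= 5 / 2 * s by nra.
have h1 : g * (s ^+ 2 / 4) <= g * nv ^+ 2.
  by apply: ler_wpM2l; [nra | rewrite !expr2; nra].
have h2 : d * (s + nv) * (s + nv) <= d * (25 / 4 * s ^+ 2).
  by rewrite -mulrA; apply: ler_wpM2l => //; rewrite expr2; nra.
have h3 : (s + nv) * e + e * (s + nv) <= 5 * q * s ^+ 2.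
  by rewrite expr2; nra.
have s2 : 0 < s ^+ 2 by rewrite exprn_gt0.
nra.
Qed.

End Perturbation.

Section IndexBound.
Context {R : realType} {X : normedModType R[i]}.
Variables (Q S : X -> X -> R[i]) (V alpha beta W : set X) (h : R[i]).
Variables (c g d eps : R) (n : nat).
Hypotheses (beta_sub : beta `<=` V) (beta_subspace : is_subspace beta).
Hypothesis alpha_dep :
  forall a : 'I_n -> X, (forall i, alpha (a i)) -> ~ lin_indep_mod [set 0] a.
Hypothesis beta_neg :
  forall b, beta b -> complex.Re (h * Q b b) <= - (g * nrm b ^+ 2).
Hypothesis W_near : forall w, W w -> nrm w = 1 ->
  exists a b, [/\ alpha a, beta b & nrm (w - (a + b)) < eps].
Hypothesis QS_close : forall x y u v, V x -> V y -> W u -> W v ->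
  cabs (Q x y - S u v) <= d * (nrm u + nrm x) * (nrm v + nrm y)
    + c * ((nrm u + nrm x) * nrm (v - y) + nrm (u - x) * (nrm v + nrm y)).

(* A nontrivial relation among the [alpha]-components of [z] turns the same
   combination of [z] into a vector close to [beta]. *)
Lemma riesz_family_near_beta (z : nat -> X) :
  riesz_family n z -> (forall i, (i < n)%N -> W (z i)) ->
  exists (t : nat -> R[i]) vv, [/\ 0 < \sum_(i < n) cabs (t i), beta vv &
    nrm (lincomb n t z - vv) <= eps * \sum_(i < n) cabs (t i)].
Proof.
move=> hr hzW.
have hab i : exists ab : X * X, (i < n)%N ->
    [/\ alpha ab.1, beta ab.2 & nrm (z i - (ab.1 + ab.2)) < eps].
  have [hi|_] := ltnP i n; last by exists (0, 0).
  have [a [b hab]] := W_near (hzW i hi) (hr i hi).1.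
  by exists (a, b).
have [ab habP] := choice hab.
pose a i := (ab i).1; pose b i := (ab i).2.
have [tau [htau [i0 hi0]]] : exists tau : 'I_n -> R[i],
    \sum_(i < n) tau i *: a i = 0 /\ exists i, tau i != 0.
  apply: lin_dep_relation; apply: alpha_dep => i.
  by have [] := habP i (ltn_ord i).
pose t k := oapp tau 0 (insub k : option 'I_n).
have tE (i : 'I_n) : t i = tau i by rewrite /t valK.
exists t, (lincomb n t b); split.
- apply: lt_le_trans (cabs_le_sum t (ltn_ord i0)).
  by rewrite tE cabs_gt0.
- apply: subsp_sum => // i _; apply: subspZ => //.
  by have [] := habP i (ltn_ord i).
- have hta : lincomb n t a = 0.
    by rewrite -htau; apply: eq_bigr => i _; rewrite tE.
  have -> : lincomb n t z - lincomb n t b =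
      lincomb n t (fun i => z i - (a i + b i)).
    rewrite -[LHS]subr0 -hta /lincomb -!sumrB; apply: eq_bigr => i _.
    by rewrite scalerBr scalerDr opprD addrA [LHS]addrAC.
  apply: le_trans (nrm_lincomb _ _ _) _; rewrite mulr_sumr.
  apply: ler_sum => i _; rewrite mulrC ler_wpM2r ?cabs_ge0 //.
  by have [_ _ /ltW] := habP i (ltn_ord i).
Qed.

Lemma riesz_family_not_nonneg (Z : set X) (z : nat -> X) :
  0 <= c -> 0 < g -> 0 <= d -> d < eps ->
  eps = g / (3 ^+ n * (2 * g + 25 + 20 * c)) -> cabs h = 1 ->
  is_subspace Z -> Z `<=` W -> (forall y, Z y -> 0 <= complex.Re (h * S y y)) ->
  riesz_family n z -> (forall i, (i < n)%N -> Z (z i)) -> False.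
Proof.
move=> c0 g0 d0 deps heps h1 hZ hZW hZpos hr hzZ.
have [t [vv [T0 bvv hvv]]] :=
  riesz_family_near_beta hr (fun i hi => hZW _ (hzZ i hi)).
set zz := lincomb n t z in hvv; set T := \sum_(i < n) _ in T0 hvv.
have Zzz : Z zz by apply: subsp_sum => // i _; apply: subspZ => //; apply: hzZ.
have TK : T <= 3 ^+ n * nrm zz.
  apply: le_trans (riesz_family_coef_bound hr t) _.
  by rewrite ler_wpM2r ?nrm_ge0 // gerBl.
(* The choice of [eps] makes [q = eps 3^n] at most [1/2] and at most
   [g / (25 + 20 c)]. *)
set L := 2 * g + 25 + 20 * c; set q := g / L.
have L0 : 0 < L by rewrite /L; nra.
have K1 : 1 <= 3 ^+ n :> R by rewrite exprn_ege1 // ler1n.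
have s0 : 0 < nrm zz.
  rewrite lt_def nrm_ge0 andbT.
  by apply: contraTneq TK => ->; rewrite mulr0 -ltNge.
have hq : eps * 3 ^+ n = q.
  rewrite heps /q -/L; field.
  by rewrite !gt_eqF // (lt_le_trans ltr01 K1).
have dq : d < q by rewrite -hq; nra.
have q2 : q <= 1 / 2 by rewrite /q ler_pdivrMr // /L; nra.
have qg : q * (25 + 20 * c) <= g.
  by rewrite /q mulrAC ler_pdivrMr // /L; nra.
apply: (@perturbed_square_contra _ g c q d (nrm zz) (nrm (zz - vv)) (nrm vv))
  => //.
- exact: nrm_ge0.
- apply: le_trans hvv _; rewrite -hq -mulrA ler_wpM2l //; nra.
- by have := nrm_subl vv zz; rewrite nrmB; lra.
- by have := nrm_subl zz vv; lra.
- have := QS_close (beta_sub bvv) (beta_sub bvv) (hZW _ Zzz) (hZW _ Zzz).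
  apply: le_trans.
  apply: le_trans
    (_ : complex.Re (h * S zz zz) - complex.Re (h * Q vv vv) <= _).
    by have := hZpos _ Zzz; have := beta_neg bvv; lra.
  rewrite -ReB -mulrBr (le_trans (Re_le_cabs _)) //.
  by rewrite cabsM h1 mul1r cabsB.
Qed.

End IndexBound.

Section Forms.
Context {R : realType} {X : normedModType R[i]}.
Implicit Types (Q : X -> X -> R[i]) (V beta : set X) (h : R[i]).

Lemma bsp_form0l Q V z : bounded_symmetric_pair Q V -> V z -> Q 0 z = 0.
Proof.
case=> [[hV _] hQl _ _ _] Vz.
have := hQl 1 0 0 z (subsp0 hV) (subsp0 hV) Vz.
rewrite scale1r addr0 mul1r => /(congr1 (fun w => w - Q 0 z)).
by rewrite subrr addrK.
Qed.

Lemma radical_subspace Q V :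
  bounded_symmetric_pair Q V -> is_subspace (radical Q V).
Proof.
move=> hQ; have [[hV _] hQl _ _ _] := hQ.
split; first by split=> [|v Vv]; [apply: subsp0 | apply: bsp_form0l hQ Vv].
move=> a x y [Vx hx] [Vy hy]; split; first by case: hV => _; apply.
by move=> v Vv; rewrite hQl // hx // hy // mulr0 addr0.
Qed.

Lemma neg_def_radical Q V beta h : bounded_symmetric_pair Q V ->
  beta `<=` V -> is_subspace beta -> neg_def h Q beta ->
  radical Q beta = [set 0].
Proof.
move=> hQ hbV hb hneg; apply/seteqP; split => x.
- move=> [bx hx]; apply: contrapT => /eqP x0.
  by have := hneg x bx x0; rewrite hx // mulr0 ltxx.
- move=> ->; split=> [|v bv]; first exact: subsp0.
  exact: bsp_form0l hQ (hbV _ bv).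
Qed.

Lemma gamma_lower_bound Q beta : radical Q beta = [set 0] ->
  (0 < gamma Q beta)%E ->
  exists2 g : R, 0 < g &
    forall b, beta b -> b != 0 -> g * nrm b ^+ 2 <= cabs (Q b b).
Proof.
move=> radb hgam.
have bne : beta <> [set 0].
  by move=> e; move: hgam; rewrite /gamma asboolT // ltxx.
have hG b : beta b -> b != 0 ->
    (gamma Q beta <= (cabs (Q b b) / nrm b ^+ 2)%:E)%E.
  move=> bb b0; rewrite /gamma asboolF // radb.
  apply: ereal_inf_lbound; exists b => //.
    by split => // /eqP; apply/negP.
  by rewrite /dist image_set1 ereal_inf1 /= subr0.
have hdiv b r : beta b -> b != 0 -> r <= cabs (Q b b) / nrm b ^+ 2 ->
    r * nrm b ^+ 2 <= cabs (Q b b).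
  by move=> _ b0; rewrite ler_pdivlMr // exprn_gt0 // nrm_gt0.
move: hgam hG; case: (gamma Q beta) => [r| |] // hgam hG.
  by exists r => // b bb b0; apply: hdiv => //; rewrite -lee_fin hG.
by exists 1 => // b bb b0; apply: hdiv => //; move: (hG b bb b0).
Qed.

Lemma cabs_sign h : h = 1 \/ h = -1 -> cabs h = 1.
Proof. by case=> ->; rewrite ?cabsN cabs1. Qed.

Lemma neg_def_gamma_bound Q V beta h : bounded_symmetric_pair Q V ->
  beta `<=` V -> is_subspace beta -> (h = 1 \/ h = -1) -> neg_def h Q beta ->
  (0 < gamma Q beta)%E ->
  exists2 g : R, 0 < g &
    forall b, beta b -> complex.Re (h * Q b b) <= - (g * nrm b ^+ 2).
Proof.
move=> hQ hbV hb hh hneg hgam.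
have [g g0 hg] := gamma_lower_bound (neg_def_radical hQ hbV hb hneg) hgam.
exists g => // b bb; have [->|b0] := eqVneq b 0.
  rewrite (bsp_form0l hQ (hbV _ (subsp0 hb))).
  by rewrite mulr0 nrm0 expr0n /= mulr0 oppr0.
have := hneg b bb b0; rewrite ltcE => /andP[/eqP hIm hRe].
have : cabs (Q b b) = - complex.Re (h * Q b b).
  rewrite -[cabs _]mul1r -(cabs_sign hh) -cabsM.
  by rewrite [h * _]complexE -hIm mulr0 addr0 cabs_real ltr0_norm.
by have := hg b bb b0; lra.
Qed.

End Forms.

Section Dimensions.
Context {R : realType} {X : normedModType R[i]}.

Lemma ereal_sup_add_le (A B : set (\bar R)) (r : R) :
  (forall a b, A a -> B b -> (a + b <= r%:E)%E) ->
  (ereal_sup A + ereal_sup B <= r%:E)%E.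
Proof.
move=> hAB; rewrite -lee_suber_addr //; apply: ge_ereal_sup => a Aa.
rewrite lee_suber_addl // -lee_suber_addr //; apply: ge_ereal_sup => b Bb.
by rewrite lee_suber_addl //; apply: hAB.
Qed.

Lemma dimension_ge0 (A : set X) : (0 <= dimension A)%E.
Proof.
apply: ereal_sup_ubound; exists 0%N => //.
by exists (fun=> 0); split=> [[]|a _ []].
Qed.

Lemma dimension_fin_bound (A : set X) (r : R) : dimension A = r%:E ->
  exists N : nat, N%:R <= r /\
    forall a : 'I_N.+1 -> X, (forall i, A (a i)) -> ~ lin_indep_mod [set 0] a.
Proof.
move=> hA; have r0 : 0 <= r by rewrite -lee_fin -hA dimension_ge0.
exists (Num.truncn r); split; first by rewrite truncn_le.
move=> a hAa hind; have : ((Num.truncn r).+1%:R%:E <= dimension A)%E.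
  by apply: ereal_sup_ubound; exists (Num.truncn r).+1 => //; exists a.
by rewrite hA lee_fin leNgt truncnS_gt.
Qed.

Lemma m_plus_dim_quot_le (h : R[i]) (S : X -> X -> R[i]) (W W0 : set X)
    (N : nat) :
  W0 0 ->
  (forall U m k (u : 'I_m -> X) (r : 'I_k -> X),
     is_subspace U -> U `<=` W -> pos_def h S U ->
     (forall i, U (u i)) -> lin_indep_mod [set 0] u ->
     (forall i, radical S W (r i)) -> lin_indep_mod [set 0] r ->
     (m + k <= N)%N) ->
  (m_plus h S W + dim_quot (radical S W) W0 <= N%:R%:E)%E.
Proof.
move=> W00 hN.
apply: ereal_sup_add_le => _ _ [U [hU hUW hUp] <-] [k [r [hr hri]] <-].
rewrite -lee_suber_addr //; apply: ge_ereal_sup => _ [m [u [hu hui]] <-].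
rewrite lee_suber_addr // -EFinD lee_fin -natrD ler_nat.
exact: hN hU hUW hUp hu hui hr (lin_indep_mod0 W00 hri).
Qed.

End Dimensions.

Section Concat.
Context {T : Type} {m k : nat}.

Definition catf (u : 'I_m -> T) (r : 'I_k -> T) (i : 'I_(m + k)) : T :=
  match fintype.split i with inl a => u a | inr b => r b end.

Lemma catf_lshift u r a : catf u r (lshift k a) = u a.
Proof. by rewrite /catf -[lshift k a]/(unsplit (inl a)) unsplitK. Qed.

Lemma catf_rshift u r b : catf u r (rshift m b) = r b.
Proof. by rewrite /catf -[rshift m b]/(unsplit (inr b)) unsplitK. Qed.

End Concat.

Section DirectSums.
Context {R : realType} {X : normedModType R[i]}.
Implicit Types (A B : set X).

Lemma subspace_add A B : is_subspace A -> is_subspace B ->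
  is_subspace [set a + b | a in A & b in B].
Proof.
move=> hA hB; split.
  by exists 0; [apply: subsp0 | exists 0; [apply: subsp0 | rewrite addr0]].
move=> c _ _ [a1 Aa1 [b1 Bb1 <-]] [a2 Aa2 [b2 Bb2 <-]].
exists (c *: a1 + a2); first by case: hA => _; apply.
exists (c *: b1 + b2); first by case: hB => _; apply.
by rewrite scalerDr addrACA.
Qed.

Lemma catf_add A B m k (u : 'I_m -> X) (r : 'I_k -> X) :
  is_subspace A -> is_subspace B ->
  (forall i, A (u i)) -> (forall i, B (r i)) ->
  forall i, [set a + b | a in A & b in B] (catf u r i).
Proof.
move=> hA hB hu hr l; rewrite -[l]splitK; case: fintype.split => [a|b].
  by exists (u a) => //; exists 0; [apply: subsp0 | rewrite catf_lshift addr0].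
by exists 0; [apply: subsp0 | exists (r b) => //; rewrite catf_rshift add0r].
Qed.

Lemma lin_indep_catf A B m k (u : 'I_m -> X) (r : 'I_k -> X) :
  is_subspace A -> is_subspace B -> (forall x, A x -> B x -> x = 0) ->
  (forall i, A (u i)) -> lin_indep_mod [set 0] u ->
  (forall i, B (r i)) -> lin_indep_mod [set 0] r ->
  lin_indep_mod [set 0] (catf u r).
Proof.
move=> hA hB hAB hu hui hr hri tau /=; rewrite big_split_ord /=.
under eq_bigr do rewrite catf_lshift.
under [X in _ + X]eq_bigr do rewrite catf_rshift.
set su := \sum_(a < m) _; set sr := \sum_(b < k) _ => hs.
have Asu : A su by apply: subsp_sum => // a _; apply: subspZ.
have Bsr : B sr by apply: subsp_sum => // b _; apply: subspZ.
have su0 : su = 0.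
  by apply: hAB => //; rewrite -[su]opprK (addr0_eq hs); apply: subspN.
have sr0 : sr = 0 by rewrite -hs su0 add0r.
move=> l; rewrite -[l]splitK; case: fintype.split => [a|b] /=.
  by apply: (hui (fun a => tau (lshift k a))).
by apply: (hri (fun b => tau (rshift m b))).
Qed.

End DirectSums.

Section Perturbations.
Context {R : realType} {X : normedModType R[i]}.
Implicit Types (Q S : X -> X -> R[i]) (V W U alpha beta : set X).

Lemma form_add_radical S W x r : bounded_symmetric_pair S W ->
  W x -> radical S W r -> S (x + r) (x + r) = S x x.
Proof.
case=> [[hW _] hSl hSr hSh _] Wx [Wr hr].
have := hSl 1 x r (x + r) Wx Wr (subspD hW Wx Wr).
rewrite scale1r mul1r => ->; rewrite (hr _ (subspD hW Wx Wr)) addr0.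
have := hSr 1 x r x Wx Wr Wx; rewrite scale1r => ->.
by rewrite conjC1 mul1r (hSh r x) // hr // conjc0 addr0.
Qed.

Lemma pos_def_add_radical h S W U : bounded_symmetric_pair S W ->
  is_subspace U -> U `<=` W -> pos_def h S U ->
  let Z := [set u + r | u in U & r in radical S W] in
  [/\ is_subspace Z, Z `<=` W & forall y, Z y -> 0 <= complex.Re (h * S y y)].
Proof.
move=> hS hU hUW hUp Z; have [[hW _] _ _ _ _] := hS.
split; first exact: subspace_add hU (radical_subspace hS).
  by move=> _ [u Uu [r [Wr _] <-]]; apply: subspD (hUW _ Uu) Wr.
move=> _ [u Uu [r Rr <-]]; rewrite (form_add_radical hS (hUW _ Uu) Rr).
have [->|u0] := eqVneq u 0; first by rewrite (bsp_form0l hS (subsp0 hW)) mulr0.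
exact/Re_ge0/ltW/hUp.
Qed.

Lemma pos_def_radical_trivial h S W U : U `<=` W -> pos_def h S U ->
  forall x, U x -> radical S W x -> x = 0.
Proof.
move=> hUW hUp x Ux [_ hx]; apply: contrapT => /eqP x0.
by have := hUp x Ux x0; rewrite (hx x (hUW _ Ux)) mulr0 ltxx.
Qed.

Lemma gap_hat_lt_near Q V alpha beta W (eps : R) :
  (gap_hat V W < eps%:E)%E -> Qorth_direct_sum Q V alpha beta ->
  forall w, W w -> nrm w = 1 ->
  exists a b, [/\ alpha a, beta b & nrm (w - (a + b)) < eps].
Proof.
rewrite /gap_hat gt_max => /andP[_ hWV] [hdec _ _] w Ww w1.
have : (dist w V < eps%:E)%E.
  by apply: le_lt_trans hWV; apply: ereal_sup_ubound; right; exists w.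
move=> /ereal_inf_lt[_ [v Vv <-]]; rewrite lte_fin => hv.
by have [a [b [Aa Bb ev]]] := (hdec v).1 Vv; exists a, b; rewrite -ev.
Qed.

Lemma delta_c_lt (c : R) Q V S W (eps : R) :
  (delta_c c Q V S W < eps%:E)%E ->
  exists d, [/\ 0 <= d, d < eps & forall x y u v, V x -> V y -> W u -> W v ->
    cabs (Q x y - S u v) <= d * (nrm u + nrm x) * (nrm v + nrm y)
      + c * ((nrm u + nrm x) * nrm (v - y) + nrm (u - x) * (nrm v + nrm y))].
Proof.
by move=> /ereal_inf_lt[_ [d [d0 hd] <-]]; rewrite lte_fin; exists d.
Qed.

End Perturbations.

Theorem theorem1p7 (R : realType) (X : completeNormedModType R[i])
    (Q : X -> X -> R[i]) (V V0 alpha beta : set X) (h : R[i]) (c : R) :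
  bounded_symmetric_pair Q V ->
  closed_subspace V0 -> V0 `<=` radical Q V ->
  (h = 1 \/ h = -1) -> 0 <= c ->
  closed_subspace alpha -> alpha `<=` V -> pos_semidef h Q alpha ->
  closed_subspace beta -> beta `<=` V -> neg_def h Q beta ->
  V0 = radical Q beta -> (0 < gamma Q beta)%E ->
  Qorth_direct_sum Q V alpha beta ->
  exists eps : R, 0 < eps /\
    forall (S : X -> X -> R[i]) (W W0 : set X),
      bounded_symmetric_pair S W ->
      closed_subspace W0 -> W0 `<=` radical S W ->
      (gap_hat V W < eps%:E)%E -> (gap V0 W0 < eps%:E)%E ->
      (delta_c c Q V S W < eps%:E)%E ->
      (m_plus h S W + dim_quot (radical S W) W0 <= dimension alpha)%E.
Proof.
move=> hQ _ _ hh c0 _ _ _ [hbeta _] hbV hneg _ hgam hds.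
have [g g0 hbneg] := neg_def_gamma_bound hQ hbV hbeta hh hneg hgam.
case hdim : (dimension alpha) (dimension_ge0 alpha) => [r| |] // _; last first.
  by exists 1; split => // *; apply: leey.
have [N [hNr hdep]] := dimension_fin_bound hdim.
exists (g / (3 ^+ N.+1 * (2 * g + 25 + 20 * c))).
split=> [|S W W0 hS [[hW00 _] _] _ hgap _ hdc].
  by rewrite divr_gt0 // mulr_gt0 ?exprn_gt0 //; nra.
have [d [d0 deps hd]] := delta_c_lt hdc.
apply: (@le_trans _ _ N%:R%:E); last by rewrite lee_fin.
apply: m_plus_dim_quot_le hW00 _ => U m k u v hU hUW hUp hu hui hv hvi.
rewrite leqNgt; apply/negP => hNmk.
have hR := radical_subspace hS.
have [hZ hZW hZpos] := pos_def_add_radical hS hU hUW hUp.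
have hcat :=
  lin_indep_catf hU hR (pos_def_radical_trivial hUW hUp) hu hui hv hvi.
have [z [hz hzZ]] :=
  riesz_family_in_subspace hZ (catf_add hU hR hu hv) hcat hNmk.
exact: (riesz_family_not_nonneg hbV hbeta hdep hbneg (gap_hat_lt_near hgap hds)
  hd c0 g0 d0 deps erefl (cabs_sign hh) hZ hZW hZpos hz hzZ).
Qed.
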